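(* Let $\mathscr{B}$ be a $\mathscr{V}$-finitely-well-complete cotensored $\mathscr{V}$-category. (1) If $\mathscr{B}$ has $\mathscr{V}$-cokernel-pairs, then $(\mathsf{Epi}_\mathscr{V}\mathscr{B},\mathsf{StrMono}_\mathscr{V}\mathscr{B})$ is a $\mathscr{V}$-factorization-system on $\mathscr{B}$. (2) For any class $\Sigma$ of morphisms in $\mathscr{B}$, letting $\mathscr{N}:=\Sigma^{\downarrow_\mathscr{V}}\cap\mathsf{StrMono}_\mathscr{V}\mathscr{B}$, the pair $(\mathscr{N}^{\uparrow_\mathscr{V}},\mathscr{N})$ is a $\mathscr{V}$-factorization-system on $\mathscr{B}$.
   Context: $\mathscr{V}$ is a closed symmetric monoidal category (no limits assumed). In a $\mathscr{V}$-category $\mathscr{B}$: $\mathscr{V}$-limits are cones sent by all $\mathscr{B}(A,-):\mathscr{B}\to\mathscr{V}$ to limit cones; $\mathscr{V}$-colimits (e.g. $\mathscr{V}$-cokernel-pairs) are $\mathscr{V}$-limits in $\mathscr{B}^{op}$. $m$ is a $\mathscr{V}$-mono if $\mathscr{B}(A,m)$ is mono in $\mathscr{V}$ for all $A$; $e$ is a $\mathscr{V}$-epi if $\mathscr{B}(e,C)$ is mono for all $C$; $\mathsf{Epi}_\mathscr{V}\mathscr{B}$ denotes the $\mathscr{V}$-epis. For $e:A_1\to A_2$, $m:B_1\to B_2$, $e\downarrow_\mathscr{V} m$ means the square formed by $\mathscr{B}(A_2,m)$, $\mathscr{B}(A_1,m)$, $\mathscr{B}(e,B_1)$, $\mathscr{B}(e,B_2)$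 is a pullback in $\mathscr{V}$; $\Sigma^{\downarrow_\mathscr{V}}$, $\mathscr{N}^{\uparrow_\mathscr{V}}$ are the classes of morphisms $\mathscr{V}$-orthogonal from all of $\Sigma$, resp. to all of $\mathscr{N}$. $\mathsf{StrMono}_\mathscr{V}\mathscr{B}$ is the class of $\mathscr{V}$-monos $m$ with $e\downarrow_\mathscr{V} m$ for all $\mathscr{V}$-epis $e$. $\mathscr{B}$ is $\mathscr{V}$-finitely-well-complete if it has all finite $\mathscr{V}$-limits and $\mathscr{V}$-fibre-products (wide $\mathscr{V}$-pullbacks) of arbitrary class-indexed families of $\mathscr{V}$-strong-monos with common codomain. A $\mathscr{V}$-factorization-system is a pair $(\mathscr{E},\mathscr{M})$ with $\mathscr{E}^{\downarrow_\mathscr{V}}=\mathscr{M}$, $\mathscr{M}^{\uparrow_\mathscr{V}}=\mathscr{E}$ and every morphism assigned a factorization $m\cdot e$, $e\in\mathscr{E}$, $m\in\mathscr{M}$. *)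

From Stdlib Require Import List.

Record Category : Type := {
  ob :> Type;
  hom : ob -> ob -> Type;
  idm : forall a, hom a a;
  comp : forall a b c, hom b c -> hom a b -> hom a c;
  comp_idl : forall a b (f : hom a b), comp a b b (idm b) f = f;
  comp_idr : forall a b (f : hom a b), comp a a b f (idm a) = f;
  comp_assoc : forall a b c d (h : hom c d) (g : hom b c) (f : hom a b),
      comp a c d h (comp a b c g f) = comp a b d (comp b c d h g) f }.
Arguments hom {c0} _ _.
Arguments idm {c0} _.
Arguments comp {c0 a b c} _ _.
Notation "g ∘ f" := (comp g f) (at level 40, left associativity).

Record MonData (C : Category) := {
  tens : C -> C -> C;
  tensm : forall a b c d, hom a b -> hom c d -> hom (tens a c) (tens b d);
  unitob : C;
  assoc : forall a b c, hom (tens (tens a b) c) (tens a (tens b c));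
  assoc_inv : forall a b c, hom (tens a (tens b c)) (tens (tens a b) c);
  lunit : forall a, hom (tens unitob a) a;
  lunit_inv : forall a, hom a (tens unitob a);
  runit : forall a, hom (tens a unitob) a;
  runit_inv : forall a, hom a (tens a unitob);
  braid : forall a b, hom (tens a b) (tens b a);
  ihom : C -> C -> C;
  ev : forall b c, hom (tens (ihom b c) b) c;
  curry : forall a b c, hom (tens a b) c -> hom a (ihom b c) }.
Arguments tens {C} _ _ _.
Arguments tensm {C} _ _ _ _ _ _ _.
Arguments unitob {C} _.
Arguments assoc {C} _ _ _ _.
Arguments assoc_inv {C} _ _ _ _.
Arguments lunit {C} _ _.
Arguments lunit_inv {C} _ _.
Arguments runit {C} _ _.
Arguments runit_inv {C} _ _.
Arguments braid {C} _ _ _.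
Arguments ihom {C} _ _ _.
Arguments ev {C} _ _ _.
Arguments curry {C} _ _ _ _ _.

Section MonLawsSec.
Variable C : Category.
Variable D : MonData C.
Local Notation "a ⊗ b" := (tens D a b) (at level 30, right associativity).
Local Notation "f ⊗m g" := (tensm D _ _ _ _ f g) (at level 30).
Local Notation I := (unitob D).
Record MonLaws : Prop := {
  tens_id : forall a b : C, idm a ⊗m idm b = idm (a ⊗ b);
  tens_comp : forall (a b c a' b' c' : C) (f : hom a b) (g : hom b c)
      (f' : hom a' b') (g' : hom b' c'),
      (g ∘ f) ⊗m (g' ∘ f') = (g ⊗m g') ∘ (f ⊗m f');
  assoc_iso1 : forall a b c, assoc D a b c ∘ assoc_inv D a b c = idm _;
  assoc_iso2 : forall a b c, assoc_inv D a b c ∘ assoc D a b c = idm _;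
  assoc_nat : forall (a a' b b' c c' : C) (f : hom a a') (g : hom b b') (h : hom c c'),
      assoc D a' b' c' ∘ ((f ⊗m g) ⊗m h) = (f ⊗m (g ⊗m h)) ∘ assoc D a b c;
  lunit_iso1 : forall a, lunit D a ∘ lunit_inv D a = idm _;
  lunit_iso2 : forall a, lunit_inv D a ∘ lunit D a = idm _;
  lunit_nat : forall (a b : C) (f : hom a b), lunit D b ∘ (idm I ⊗m f) = f ∘ lunit D a;
  runit_iso1 : forall a, runit D a ∘ runit_inv D a = idm _;
  runit_iso2 : forall a, runit_inv D a ∘ runit D a = idm _;
  runit_nat : forall (a b : C) (f : hom a b), runit D b ∘ (f ⊗m idm I) = f ∘ runit D a;
  braid_nat : forall (a a' b b' : C) (f : hom a a') (g : hom b b'),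
      braid D a' b' ∘ (f ⊗m g) = (g ⊗m f) ∘ braid D a b;
  braid_sym : forall a b, braid D b a ∘ braid D a b = idm _;
  pentagon : forall a b c d,
      assoc D a b (c ⊗ d) ∘ assoc D (a ⊗ b) c d
      = (idm a ⊗m assoc D b c d) ∘ assoc D a (b ⊗ c) d ∘ (assoc D a b c ⊗m idm d);
  triangle : forall a b, (idm a ⊗m lunit D b) ∘ assoc D a I b = runit D a ⊗m idm b;
  hexagon : forall a b c,
      assoc D b c a ∘ braid D a (b ⊗ c) ∘ assoc D a b c
      = (idm b ⊗m braid D a c) ∘ assoc D b a c ∘ (braid D a b ⊗m idm c);
  curry_ev : forall a b c (g : hom (a ⊗ b) c),
      ev D b c ∘ (curry D a b c g ⊗m idm b) = g;
  curry_uniq : forall a b c (g : hom (a ⊗ b) c) (h : hom a (ihom D b c)),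
      ev D b c ∘ (h ⊗m idm b) = g -> h = curry D a b c g }.
End MonLawsSec.

Record SMCC : Type := {
  scat :> Category;
  sdata : MonData scat;
  slaws : MonLaws scat sdata }.

Definition tn {V : SMCC} (a b : V) : V := tens (sdata V) a b.
Definition tm {V : SMCC} {a b c d : V} (f : hom a b) (g : hom c d)
  : hom (tn a c) (tn b d) := tensm (sdata V) a b c d f g.
Definition I_ (V : SMCC) : V := unitob (sdata V).
Definition lu {V : SMCC} (a : V) : hom (tn (I_ V) a) a := lunit (sdata V) a.
Definition lui {V : SMCC} (a : V) : hom a (tn (I_ V) a) := lunit_inv (sdata V) a.
Definition ru {V : SMCC} (a : V) : hom (tn a (I_ V)) a := runit (sdata V) a.
Definition rui {V : SMCC} (a : V) : hom a (tn a (I_ V)) := runit_inv (sdata V) a.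
Definition asc {V : SMCC} (a b c : V) : hom (tn (tn a b) c) (tn a (tn b c)) :=
  assoc (sdata V) a b c.
Definition br {V : SMCC} (a b : V) : hom (tn a b) (tn b a) := braid (sdata V) a b.
Definition ih {V : SMCC} (a b : V) : V := ihom (sdata V) a b.
Definition curryV {V : SMCC} {a b c : V} (g : hom (tn a b) c) : hom a (ih b c) :=
  curry (sdata V) a b c g.

Record VCatData (V : SMCC) : Type := {
  vob : Type;
  vhom : vob -> vob -> V;
  vM : forall a b c, hom (tn (vhom b c) (vhom a b)) (vhom a c);
  vj : forall a, hom (I_ V) (vhom a a) }.

Section VCatLawsSec.
Variable V : SMCC.
Variable B : VCatData V.
Record VCatLaws : Prop := {
  vassoc : forall a b c d,
      vM V B a c d ∘ tm (idm _) (vM V B a b c) ∘ asc _ _ _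
      = vM V B a b d ∘ tm (vM V B b c d) (idm _);
  vunitl : forall a b, vM V B a b b ∘ tm (vj V B b) (idm _) = lu (vhom V B a b);
  vunitr : forall a b, vM V B a a b ∘ tm (idm _) (vj V B a) = ru (vhom V B a b) }.
End VCatLawsSec.

Record VCat (V : SMCC) : Type := {
  vdata :> VCatData V;
  vlaws : VCatLaws V vdata }.

Definition monoV {V : SMCC} {x y : V} (f : hom x y) : Prop :=
  forall (z : V) (g h : hom z x), f ∘ g = f ∘ h -> g = h.
Definition isoV {V : SMCC} {x y : V} (f : hom x y) : Prop :=
  exists g : hom y x, g ∘ f = idm x /\ f ∘ g = idm y.
Definition is_pullbackV {V : SMCC} {p x y z : V}
    (p1 : hom p x) (p2 : hom p y) (f : hom x z) (g : hom y z) : Prop :=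
  f ∘ p1 = g ∘ p2 /\
  forall (q : V) (q1 : hom q x) (q2 : hom q y), f ∘ q1 = g ∘ q2 ->
    exists! u : hom q p, p1 ∘ u = q1 /\ p2 ∘ u = q2.

Section VNotions.
Context {V : SMCC} (B : VCat V).
Local Notation Ob := (vob V B).
Local Notation H := (vhom V B).

(** morphisms of (the underlying category of) B *)
Definition mor (a b : Ob) : Type := hom (I_ V) (H a b).
Definition compB {a b c : Ob} (g : mor b c) (f : mor a b) : mor a c :=
  vM V B a b c ∘ tm g f ∘ lui (I_ V).
Definition idB (a : Ob) : mor a a := vj V B a.
Definition repR (a : Ob) {b c : Ob} (g : mor b c) : hom (H a b) (H a c) :=
  vM V B a b c ∘ tm g (idm _) ∘ lui (H a b).
Definition repL {a b : Ob} (f : mor a b) (c : Ob) : hom (H b c) (H a c) :=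
  vM V B a b c ∘ tm (idm _) f ∘ rui (H b c).

Definition MorClass : Type := forall a b : Ob, mor a b -> Prop.

Definition VMono {b1 b2 : Ob} (m : mor b1 b2) : Prop := forall a, monoV (repR a m).
Definition VEpi {a1 a2 : Ob} (e : mor a1 a2) : Prop := forall c, monoV (repL e c).

Definition orthV {a1 a2 b1 b2 : Ob} (e : mor a1 a2) (m : mor b1 b2) : Prop :=
  is_pullbackV (repR a2 m) (repL e b1) (repL e b2) (repR a1 m).

Definition downV (S : MorClass) : MorClass :=
  fun b1 b2 m => forall a1 a2 (e : mor a1 a2), S a1 a2 e -> orthV e m.
Definition upV (N : MorClass) : MorClass :=
  fun a1 a2 e => forall b1 b2 (m : mor b1 b2), N b1 b2 m -> orthV e m.
Definition capC (S T : MorClass) : MorClass := fun a b f => S a b f /\ T a b f.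

Definition EpiV : MorClass := fun a b e => VEpi e.
Definition StrMonoV : MorClass :=
  fun b1 b2 m => VMono m /\ forall a1 a2 (e : mor a1 a2), VEpi e -> orthV e m.

Definition is_fact_system (E M : MorClass) : Prop :=
  (forall b1 b2 (m : mor b1 b2), M b1 b2 m <-> downV E b1 b2 m) /\
  (forall a1 a2 (e : mor a1 a2), E a1 a2 e <-> upV M a1 a2 e) /\
  (forall a b (f : mor a b), exists c (e : mor a c) (m : mor c b),
      E a c e /\ M c b m /\ f = compB m e).

Definition finite_cat (J : Category) : Prop :=
  (exists l : list J, forall x, In x l) /\
  (forall i j : J, exists l : list (hom i j), forall f, In f l).

Definition is_Vlimit (J : Category) (D : J -> Ob) (Dm : forall i j, hom i j -> mor (D i) (D j))
    (L : Ob) (pi : forall j, mor L (D j)) : Prop :=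
  (forall i j (u : hom i j), compB (Dm i j u) (pi i) = pi j) /\
  forall (a : Ob) (X : V) (x : forall j, hom X (H a (D j))),
    (forall i j (u : hom i j), repR a (Dm i j u) ∘ x i = x j) ->
    exists! w : hom X (H a L), forall j, repR a (pi j) ∘ w = x j.

Definition has_finite_Vlimits : Prop :=
  forall (J : Category), finite_cat J ->
  forall (D : J -> Ob) (Dm : forall i j, hom i j -> mor (D i) (D j)),
    (forall i, Dm i i (idm i) = idB (D i)) ->
    (forall i j k (g : hom j k) (f : hom i j), Dm i k (g ∘ f) = compB (Dm j k g) (Dm i j f)) ->
    exists L pi, is_Vlimit J D Dm L pi.

Definition is_Vfibre_product (b : Ob) (I : Type) (A : I -> Ob) (m : forall i, mor (A i) b)
    (P : Ob) (q : mor P b) (p : forall i, mor P (A i)) : Prop :=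
  (forall i, compB (m i) (p i) = q) /\
  forall (a : Ob) (X : V) (y : hom X (H a b)) (x : forall i, hom X (H a (A i))),
    (forall i, repR a (m i) ∘ x i = y) ->
    exists! w : hom X (H a P), repR a q ∘ w = y /\ forall i, repR a (p i) ∘ w = x i.

Definition fin_well_complete : Prop :=
  has_finite_Vlimits /\
  forall (b : Ob) (I : Type) (A : I -> Ob) (m : forall i, mor (A i) b),
    (forall i, StrMonoV (A i) b (m i)) ->
    exists P q p, is_Vfibre_product b I A m P q p.

(** cotensors: [c] with [eps : X -> B(c,b)] such that the induced
    B(a,c) -> [X, B(a,b)] is invertible for all a *)
Definition is_cotensor (X : V) (b c : Ob) (eps : hom X (H c b)) : Prop :=
  forall a : Ob,
    isoV (curryV (vM V B a c b ∘ br (H a c) (H c b) ∘ tm (idm (H a c)) eps)).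

Definition cotensored : Prop :=
  forall (X : V) (b : Ob), exists c eps, is_cotensor X b c eps.

(** V-cokernel-pairs (V-pushout of f along f, i.e. V-limit in B^op) *)
Definition has_Vcokernel_pairs : Prop :=
  forall (a b : Ob) (f : mor a b), exists (q : Ob) (i1 i2 : mor b q),
    compB i1 f = compB i2 f /\
    forall c : Ob, is_pullbackV (repL i1 c) (repL i2 c) (repL f c) (repL f c).
End VNotions.

(* Both parts are instances of one construction. Let N be the strong V-monos V-orthogonal
   to Sigma (for part 1, Sigma empty, so N = StrMono_V). V-monos and every class of the form
   downV S contain the isomorphisms and are closed under composition, V-pullbacks,
   V-fibre products and cotensors, hence so is N. Given f, let q be the fibre product of all
   N-morphisms through which f factors, so f = q e. Pulling an N-morphism back along a square
   and using minimality of q gives e the ordinary lifting property against N; cotensoring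
   upgrades this to V-orthogonality, because a lifting problem on Z-elements against n is an
   ordinary one against n^Z, which is again in N. For part 1 it remains to show that a
   morphism e V-orthogonal to all strong V-monos is a V-epi: the equalizer of the cokernel
   pair of e is a strong V-mono through which e factors, so e lifts against it and the two
   legs of the cokernel pair coincide.
   V-orthogonality and V-limits are handled throughout on generalised elements Z -> B(a,b). *)

From Stdlib Require Import ClassicalEpsilon List.
Import ListNotations.

Arguments comp_assoc {c0 a b c d} h g f.
Arguments comp_idl {c0 a b} f.
Arguments comp_idr {c0 a b} f.

Lemma comp_congr_l {C : Category} {a b c : C} {f g : hom a b} :
  f = g -> forall k : hom b c, k ∘ f = k ∘ g.
Proof. now intros ->. Qed.

(* Rewrite with an equation between composites up to associativity: everything is
   left-normalised, and the equation is also tried under an arbitrary postcomposition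
   so that it matches a segment in the middle of a composite. *)
Ltac rewrite_assoc E :=
  let E1 := fresh "E1" in let E2 := fresh "E2" in
  pose proof E as E1; repeat rewrite comp_assoc in E1;
  pose proof (fun c => @comp_congr_l _ _ _ c _ _ E1) as E2;
  repeat setoid_rewrite comp_assoc in E2;
  repeat rewrite comp_assoc; first [rewrite E1 | rewrite E2];
  repeat rewrite comp_assoc; clear E1 E2.
Ltac rewrite_assoc_rev E := rewrite_assoc (eq_sym E).

(** * Coherence in a symmetric monoidal closed category *)

Section Coherence.
Context {V : SMCC}.
Local Notation L := (slaws V).
Local Notation I := (I_ V).

Definition asci (a b c : V) : hom (tn a (tn b c)) (tn (tn a b) c) := assoc_inv (sdata V) a b c.

Lemma tm_id (a b : V) : tm (idm a) (idm b) = idm (tn a b).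
Proof. apply (tens_id _ _ L). Qed.
Lemma tm_comp {a b c a' b' c' : V} (f : hom a b) (g : hom b c) (f' : hom a' b') (g' : hom b' c') :
  tm (g ∘ f) (g' ∘ f') = tm g g' ∘ tm f f'.
Proof. apply (tens_comp _ _ L). Qed.
Lemma tm_compl {a b c a' : V} (f : hom a b) (g : hom b c) :
  tm (g ∘ f) (idm a') = tm g (idm a') ∘ tm f (idm a').
Proof. now rewrite <- tm_comp, comp_idl. Qed.
Lemma tm_compr {a b c a' : V} (f : hom a b) (g : hom b c) :
  tm (idm a') (g ∘ f) = tm (idm a') g ∘ tm (idm a') f.
Proof. now rewrite <- tm_comp, comp_idl. Qed.
Lemma tm_splitr {a b a' b' : V} (f : hom a b) (f' : hom a' b') :
  tm f f' = tm f (idm b') ∘ tm (idm a) f'.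
Proof. now rewrite <- tm_comp, comp_idl, comp_idr. Qed.
Lemma tm_splitl {a b a' b' : V} (f : hom a b) (f' : hom a' b') :
  tm f f' = tm (idm b) f' ∘ tm f (idm a').
Proof. now rewrite <- tm_comp, comp_idl, comp_idr. Qed.

Lemma lu_lui (a : V) : lu a ∘ lui a = idm a. Proof. apply (lunit_iso1 _ _ L). Qed.
Lemma lui_lu (a : V) : lui a ∘ lu a = idm _. Proof. apply (lunit_iso2 _ _ L). Qed.
Lemma ru_rui (a : V) : ru a ∘ rui a = idm a. Proof. apply (runit_iso1 _ _ L). Qed.
Lemma rui_ru (a : V) : rui a ∘ ru a = idm _. Proof. apply (runit_iso2 _ _ L). Qed.
Lemma asc_asci (a b c : V) : asc a b c ∘ asci a b c = idm _. Proof. apply (assoc_iso1 _ _ L). Qed.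
Lemma asci_asc (a b c : V) : asci a b c ∘ asc a b c = idm _. Proof. apply (assoc_iso2 _ _ L). Qed.
Lemma br_br (a b : V) : br b a ∘ br a b = idm _. Proof. apply (braid_sym _ _ L). Qed.
Lemma br_nat {a a' b b' : V} (f : hom a a') (g : hom b b') : br a' b' ∘ tm f g = tm g f ∘ br a b.
Proof. apply (braid_nat _ _ L). Qed.
Lemma lu_nat {a b : V} (f : hom a b) : lu b ∘ tm (idm I) f = f ∘ lu a.
Proof. apply (lunit_nat _ _ L). Qed.
Lemma ru_nat {a b : V} (f : hom a b) : ru b ∘ tm f (idm I) = f ∘ ru a.
Proof. apply (runit_nat _ _ L). Qed.
Lemma asc_nat {a a' b b' c c' : V} (f : hom a a') (g : hom b b') (h : hom c c') :
  asc a' b' c' ∘ tm (tm f g) h = tm f (tm g h) ∘ asc a b c.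
Proof. apply (assoc_nat _ _ L). Qed.
Lemma triangle_asc (a b : V) : tm (idm a) (lu b) ∘ asc a I b = tm (ru a) (idm b).
Proof. apply (triangle _ _ L). Qed.
Lemma pentagon_asc (a b c d : V) :
  asc a b (tn c d) ∘ asc (tn a b) c d
  = tm (idm a) (asc b c d) ∘ asc a (tn b c) d ∘ tm (asc a b c) (idm d).
Proof. apply (pentagon _ _ L). Qed.

Lemma split_epi_cancel {a b c : V} (f g : hom b c) (i : hom a b) (j : hom b a) :
  i ∘ j = idm b -> f ∘ i = g ∘ i -> f = g.
Proof.
  intros Hij E. now rewrite <- (comp_idr f), <- (comp_idr g), <- Hij, !comp_assoc, E.
Qed.
Lemma split_mono_cancel {a b c : V} (f g : hom c a) (i : hom a b) (j : hom b a) :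
  j ∘ i = idm a -> i ∘ f = i ∘ g -> f = g.
Proof.
  intros Hji E. now rewrite <- (comp_idl f), <- (comp_idl g), <- Hji, <- !comp_assoc, E.
Qed.

Lemma lui_nat {a b : V} (f : hom a b) : lui b ∘ f = tm (idm I) f ∘ lui a.
Proof.
  apply (split_mono_cancel _ _ (lu b) (lui b) (lui_lu b)).
  now rewrite comp_assoc, lu_lui, comp_idl, comp_assoc, lu_nat, <- comp_assoc, lu_lui, comp_idr.
Qed.
Lemma rui_nat {a b : V} (f : hom a b) : rui b ∘ f = tm f (idm I) ∘ rui a.
Proof.
  apply (split_mono_cancel _ _ (ru b) (rui b) (rui_ru b)).
  now rewrite comp_assoc, ru_rui, comp_idl, comp_assoc, ru_nat, <- comp_assoc, ru_rui, comp_idr.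
Qed.

Lemma tm_unitl_inj {a b : V} (f g : hom a b) : tm (idm I) f = tm (idm I) g -> f = g.
Proof.
  intro E. apply (split_epi_cancel _ _ (lu a) (lui a) (lu_lui a)).
  now rewrite <- !lu_nat, E.
Qed.
Lemma tm_unitr_inj {a b : V} (f g : hom a b) : tm f (idm I) = tm g (idm I) -> f = g.
Proof.
  intro E. apply (split_epi_cancel _ _ (ru a) (rui a) (ru_rui a)).
  now rewrite <- !ru_nat, E.
Qed.

(* Kelly's consequences of the triangle and pentagon axioms. *)
Lemma lu_tens (a b : V) : lu (tn a b) ∘ asc I a b = tm (lu a) (idm b).
Proof.
  apply tm_unitl_inj.
  pose (R := asc I (tn I a) b ∘ tm (asc I I a) (idm b)).
  pose (Ri := tm (asci I I a) (idm b) ∘ asci I (tn I a) b).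
  assert (HR : R ∘ Ri = idm _).
  { unfold R, Ri. rewrite_assoc_rev (tm_compl (asci I I a) (asc I I a) (a':=b)).
    rewrite asc_asci, tm_id, comp_idr. apply asc_asci. }
  apply (split_epi_cancel _ _ R Ri HR). unfold R.
  rewrite tm_compr.
  rewrite_assoc_rev (pentagon_asc I I a b). rewrite_assoc (triangle_asc I (tn a b)).
  rewrite <- (tm_id a b). rewrite_assoc_rev (asc_nat (ru I) (idm a) (idm b)).
  rewrite_assoc_rev (asc_nat (idm I) (lu a) (idm b)).
  rewrite_assoc_rev (tm_compl (asc I I a) (tm (idm I) (lu a)) (a':=b)).
  now rewrite triangle_asc.
Qed.

Lemma asc_lui (a b : V) : asc I a b ∘ tm (lui a) (idm b) = lui (tn a b).
Proof.
  apply (split_mono_cancel _ _ (lu (tn a b)) (lui (tn a b)) (lui_lu _)).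
  rewrite lu_lui. rewrite_assoc (lu_tens a b). now rewrite <- tm_compl, lu_lui, tm_id.
Qed.

Lemma ru_tens (a b : V) : ru (tn a b) = tm (idm a) (ru b) ∘ asc a b I.
Proof.
  apply tm_unitr_inj.
  rewrite <- triangle_asc.
  assert (P : asc (tn a b) I I = asci a b (tn I I) ∘ (tm (idm a) (asc b I I)
              ∘ asc a (tn b I) I ∘ tm (asc a b I) (idm I))).
  { rewrite <- pentagon_asc. rewrite_assoc (asci_asc a b (tn I I)). now rewrite comp_idl. }
  assert (N : tm (idm (tn a b)) (lu I) ∘ asci a b (tn I I)
              = asci a b I ∘ tm (idm a) (tm (idm b) (lu I))).
  { rewrite <- (tm_id a b).
    transitivity (asci a b I ∘ asc a b I ∘ tm (tm (idm a) (idm b)) (lu I) ∘ asci a b (tn I I)).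
    { now rewrite asci_asc, comp_idl. }
    rewrite_assoc (asc_nat (idm a) (idm b) (lu I)). rewrite_assoc (asc_asci a b (tn I I)).
    now rewrite comp_idr. }
  rewrite P. rewrite_assoc N.
  rewrite_assoc_rev (tm_compr (asc b I I) (tm (idm b) (lu I)) (a':=a)). rewrite triangle_asc.
  rewrite_assoc_rev (asc_nat (idm a) (ru b) (idm I)). rewrite_assoc (asci_asc a b I).
  now rewrite comp_idl, <- tm_compl.
Qed.

Lemma asc_rui (a b : V) : asc a b I ∘ rui (tn a b) = tm (idm a) (rui b).
Proof.
  apply (split_mono_cancel _ _ (tm (idm a) (ru b)) (tm (idm a) (rui b))).
  { now rewrite <- tm_compr, rui_ru, tm_id. }
  rewrite_assoc_rev (ru_tens a b). now rewrite ru_rui, <- tm_compr, ru_rui, tm_id.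
Qed.

Lemma rui_unit : rui I = lui I.
Proof.
  assert (Hlu : lu I = ru I).
  { apply tm_unitr_inj. rewrite <- lu_tens, <- triangle_asc. f_equal.
    apply (split_mono_cancel _ _ (lu I) (lui I) (lui_lu _)). symmetry. apply lu_nat. }
  now rewrite <- (comp_idr (rui I)), <- (lu_lui I), Hlu, comp_assoc, rui_ru, comp_idl.
Qed.

Lemma curry_nat {a a' b c : V} (g : hom (tn a b) c) (h : hom a' a) :
  curryV g ∘ h = curryV (g ∘ tm h (idm b)).
Proof.
  apply (curry_uniq _ _ L).
  change (ev (sdata V) b c ∘ tm (curryV g ∘ h) (idm b) = g ∘ tm h (idm b)).
  rewrite tm_compl, comp_assoc. unfold curryV, tm, ih, tn. now rewrite (curry_ev _ _ L).
Qed.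
Lemma curry_inj {a b c : V} (g g' : hom (tn a b) c) : curryV g = curryV g' -> g = g'.
Proof.
  intro E. rewrite <- (curry_ev _ _ L a b c g), <- (curry_ev _ _ L a b c g').
  fold (@curryV V a b c g) (@curryV V a b c g'). now rewrite E.
Qed.
End Coherence.

(** * Generalised elements of hom-objects *)

Section Elements.
Context {V : SMCC} (B : VCat V).
Local Notation Ob := (vob V B).
Local Notation H := (vhom V B).
Local Notation I := (I_ V).
Local Notation LB := (vlaws V B).

Definition gcomp {U W : V} {a b c : Ob} (u : hom U (H b c)) (w : hom W (H a b))
  : hom (tn U W) (H a c) := vM V B a b c ∘ tm u w.

Lemma gcomp_natl {U U' W : V} {a b c : Ob} (u : hom U (H b c)) (s : hom U' U) (w : hom W (H a b)) :
  gcomp (u ∘ s) w = gcomp u w ∘ tm s (idm W).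
Proof. unfold gcomp. now rewrite <- comp_assoc, <- tm_comp, comp_idr. Qed.
Lemma gcomp_natr {U W W' : V} {a b c : Ob} (u : hom U (H b c)) (w : hom W (H a b)) (t : hom W' W) :
  gcomp u (w ∘ t) = gcomp u w ∘ tm (idm U) t.
Proof. unfold gcomp. now rewrite <- comp_assoc, <- tm_comp, comp_idr. Qed.

Lemma gcomp_assoc {U U' W : V} {a b c d : Ob}
    (u : hom U (H c d)) (v : hom U' (H b c)) (w : hom W (H a b)) :
  gcomp (gcomp u v) w = gcomp u (gcomp v w) ∘ asc U U' W.
Proof.
  unfold gcomp. rewrite <- (comp_idl w) at 1. rewrite tm_comp.
  rewrite_assoc_rev (vassoc V B LB a b c d). rewrite_assoc (asc_nat u v w).
  rewrite <- (comp_idl u) at 2.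
  now rewrite_assoc_rev (tm_comp u (idm (H c d)) (tm v w) (vM V B a b c)).
Qed.
Lemma gcomp_assoc_inv {U U' W : V} {a b c d : Ob}
    (u : hom U (H c d)) (v : hom U' (H b c)) (w : hom W (H a b)) :
  gcomp u (gcomp v w) = gcomp (gcomp u v) w ∘ asci U U' W.
Proof. now rewrite gcomp_assoc, <- comp_assoc, asc_asci, comp_idr. Qed.

Lemma gcomp_idl {W : V} {a b : Ob} (w : hom W (H a b)) : gcomp (vj V B b) w = w ∘ lu W.
Proof. unfold gcomp. rewrite tm_splitr, comp_assoc, (vunitl V B LB). apply lu_nat. Qed.
Lemma gcomp_idr {U : V} {a b : Ob} (u : hom U (H a b)) : gcomp u (vj V B a) = u ∘ ru U.
Proof. unfold gcomp. rewrite tm_splitl, comp_assoc, (vunitr V B LB). apply ru_nat. Qed.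

Lemma repR_gcomp (a : Ob) {b c : Ob} (g : mor B b c) {Z : V} (x : hom Z (H a b)) :
  repR B a g ∘ x = gcomp g x ∘ lui Z.
Proof.
  unfold repR, gcomp. rewrite_assoc (lui_nat x). now rewrite_assoc_rev (tm_splitr g x).
Qed.
Lemma repL_gcomp {a b : Ob} (f : mor B a b) (c : Ob) {Z : V} (y : hom Z (H b c)) :
  repL B f c ∘ y = gcomp y f ∘ rui Z.
Proof.
  unfold repL, gcomp. rewrite_assoc (rui_nat y). now rewrite_assoc_rev (tm_splitl y f).
Qed.

Lemma compB_repR {a b c : Ob} (g : mor B b c) (f : mor B a b) : compB B g f = repR B a g ∘ f.
Proof. now rewrite repR_gcomp. Qed.
Lemma compB_repL {a b c : Ob} (g : mor B b c) (f : mor B a b) : compB B g f = repL B f c ∘ g.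
Proof. now rewrite repL_gcomp, rui_unit. Qed.

Lemma repR_compB (a : Ob) {b c d : Ob} (g : mor B c d) (f : mor B b c) {Z : V} (x : hom Z (H a b)) :
  repR B a (compB B g f) ∘ x = repR B a g ∘ (repR B a f ∘ x).
Proof.
  rewrite !repR_gcomp. unfold compB at 1. fold (gcomp g f).
  rewrite gcomp_natl, gcomp_assoc, gcomp_natr.
  rewrite_assoc (asc_lui I Z). now rewrite_assoc (lui_nat (lui Z)).
Qed.
Lemma repL_compB {a b d : Ob} (g : mor B b d) (f : mor B a b) (c : Ob) {Z : V} (y : hom Z (H d c)) :
  repL B (compB B g f) c ∘ y = repL B f c ∘ (repL B g c ∘ y).
Proof.
  rewrite !repL_gcomp. unfold compB at 1. fold (gcomp g f).
  rewrite gcomp_natr, gcomp_natl, gcomp_assoc.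
  rewrite_assoc_rev (rui_nat (rui Z)). rewrite_assoc (asc_rui Z I). now rewrite rui_unit.
Qed.
Lemma repR_repL {a' a b c : Ob} (f : mor B a' a) (g : mor B b c) {Z : V} (y : hom Z (H a b)) :
  repR B a' g ∘ (repL B f b ∘ y) = repL B f c ∘ (repR B a g ∘ y).
Proof.
  rewrite !repR_gcomp, !repL_gcomp, gcomp_natr, gcomp_natl, gcomp_assoc.
  rewrite_assoc_rev (rui_nat (lui Z)). now rewrite_assoc (asc_rui I Z).
Qed.
Lemma repR_idB (a b : Ob) {Z : V} (x : hom Z (H a b)) : repR B a (idB B b) ∘ x = x.
Proof. unfold idB. now rewrite repR_gcomp, gcomp_idl, <- comp_assoc, lu_lui, comp_idr. Qed.
Lemma repL_idB (a b : Ob) {Z : V} (x : hom Z (H a b)) : repL B (idB B a) b ∘ x = x.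
Proof. unfold idB. now rewrite repL_gcomp, gcomp_idr, <- comp_assoc, ru_rui, comp_idr. Qed.

Lemma compB_assoc {a b c d : Ob} (h : mor B c d) (g : mor B b c) (f : mor B a b) :
  compB B h (compB B g f) = compB B (compB B h g) f.
Proof. now rewrite (compB_repR (compB B h g) f), repR_compB, <- !compB_repR. Qed.
Lemma compB_idl {a b : Ob} (f : mor B a b) : compB B (idB B b) f = f.
Proof. rewrite compB_repR. apply repR_idB. Qed.
Lemma compB_idr {a b : Ob} (f : mor B a b) : compB B f (idB B a) = f.
Proof. rewrite compB_repL. apply repL_idB. Qed.

Definition orth_elt {a1 a2 b1 b2 : Ob} (e : mor B a1 a2) (m : mor B b1 b2) : Prop :=
  forall (Z : V) (y : hom Z (H a2 b2)) (x : hom Z (H a1 b1)),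
    repL B e b2 ∘ y = repR B a1 m ∘ x ->
    exists! w : hom Z (H a2 b1), repR B a2 m ∘ w = y /\ repL B e b1 ∘ w = x.

Lemma orthV_elt {a1 a2 b1 b2 : Ob} (e : mor B a1 a2) (m : mor B b1 b2) :
  orthV B e m <-> orth_elt e m.
Proof.
  split.
  - intros [_ HU] Z y x Hyx. exact (HU Z y x Hyx).
  - intro HE. split; [|exact HE].
    pose proof (repR_repL e m (idm _)) as P. rewrite !comp_idr in P. now symmetry.
Qed.

Lemma downV_elt (S : MorClass B) {b1 b2 : Ob} (m : mor B b1 b2) :
  downV B S b1 b2 m <-> forall a1 a2 (e : mor B a1 a2), S a1 a2 e -> orth_elt e m.
Proof. split; intros h a1 a2 e He; apply orthV_elt, h, He. Qed.

(** * Cotensors *)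

Lemma cotensor_univ (X : V) (b c : Ob) (eps : hom X (H c b)) :
  is_cotensor B X b c eps ->
  forall (a : Ob) (Z : V) (k : hom (tn X Z) (H a b)), exists! z : hom Z (H a c), gcomp eps z = k.
Proof.
  intros Hc a Z k. destruct (Hc a) as [Psi [HPF HFP]].
  set (Phi := curryV (vM V B a c b ∘ br (H a c) (H c b) ∘ tm (idm (H a c)) eps)) in *.
  assert (Transpose : forall z : hom Z (H a c), Phi ∘ z = curryV (gcomp eps z ∘ br Z X)).
  { intro z. unfold Phi. rewrite curry_nat. f_equal. unfold gcomp.
    now rewrite <- comp_assoc, <- tm_comp, comp_idl, comp_idr, <- comp_assoc, br_nat,
      comp_assoc. }
  assert (Hbr : forall g g' : hom (tn X Z) (H a b), g ∘ br Z X = g' ∘ br Z X -> g = g').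
  { intros g g'. apply (split_epi_cancel _ _ (br Z X) (br X Z) (br_br X Z)). }
  exists (Psi ∘ curryV (k ∘ br Z X)). split.
  - apply Hbr, curry_inj. rewrite <- Transpose, comp_assoc. fold Phi.
    now rewrite HFP, comp_idl.
  - intros z' Hz'. now rewrite <- Hz', <- Transpose, comp_assoc, HPF, comp_idl.
Qed.

Lemma cotensor_inj (X : V) (b c : Ob) (eps : hom X (H c b)) :
  is_cotensor B X b c eps -> forall (a : Ob) (Z : V) (z1 z2 : hom Z (H a c)),
  gcomp eps z1 = gcomp eps z2 -> z1 = z2.
Proof.
  intros Hc a Z z1 z2 E. destruct (cotensor_univ X b c eps Hc a Z (gcomp eps z1)) as [z [_ U]].
  transitivity z; [symmetry|]; apply U; auto.
Qed.

Lemma gcomp_repL {X : V} {a' a b c : Ob} (eps : hom X (H c b)) (f : mor B a' a)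
    {Z : V} (z : hom Z (H a c)) :
  gcomp eps (repL B f c ∘ z) = repL B f b ∘ gcomp eps z.
Proof.
  rewrite !repL_gcomp, gcomp_natr, gcomp_assoc. now rewrite_assoc (asc_rui X Z).
Qed.

Lemma cotensor_mor (X : V) (C D cC cD : Ob) (epsC : hom X (H cC C)) (epsD : hom X (H cD D)) :
  is_cotensor B X D cD epsD -> forall n : mor B C D,
  exists nX : mor B cC cD, forall (a : Ob) (Z : V) (z : hom Z (H a cC)),
    gcomp epsD (repR B a nX ∘ z) = repR B a n ∘ gcomp epsC z.
Proof.
  intros HD n.
  destruct (cotensor_univ X D cD epsD HD cC I (repR B cC n ∘ epsC ∘ ru X)) as [nX [HnX _]].
  exists nX. intros a Z z.
  rewrite (repR_gcomp a nX), gcomp_natr, gcomp_assoc_inv, HnX, gcomp_natl.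
  rewrite <- (triangle_asc X Z). rewrite_assoc (asc_asci X I Z). rewrite comp_idr.
  rewrite_assoc_rev (tm_compr (lui Z) (lu Z) (a':=X)). rewrite lu_lui, tm_id, comp_idr.
  rewrite (repR_gcomp cC n epsC), gcomp_natl, gcomp_assoc. rewrite_assoc (asc_lui X Z).
  now rewrite repR_gcomp.
Qed.
End Elements.

(** * Closure properties of V-monos and of classes [downV S] *)

Section Closure.
Context {V : SMCC} (B : VCat V).
Local Notation Ob := (vob V B).
Local Notation H := (vhom V B).
Local Notation mor := (mor B).
Local Notation compB := (compB B).
Local Notation repR := (repR B).
Local Notation repL := (repL B).

Lemma downV_comp (S : MorClass B) {b0 b1 b2 : Ob} (m1 : mor b0 b1) (m2 : mor b1 b2) :
  downV B S _ _ m1 -> downV B S _ _ m2 -> downV B S _ _ (compB m2 m1).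
Proof.
  rewrite !downV_elt. intros h1 h2 a1 a2 e He Z y x Hyx.
  rewrite repR_compB in Hyx.
  destruct (h2 a1 a2 e He Z y _ Hyx) as [w2 [[Hw2y Hw2x] U2]].
  destruct (h1 a1 a2 e He Z w2 x Hw2x) as [w1 [[Hw1y Hw1x] U1]].
  exists w1. split.
  - split; [rewrite repR_compB, Hw1y; exact Hw2y | exact Hw1x].
  - intros w' [Hy' Hx']. rewrite repR_compB in Hy'. apply U1. split; [|exact Hx'].
    symmetry. apply U2. split; [exact Hy'|]. now rewrite <- repR_repL, Hx'.
Qed.

Lemma VMono_comp {b0 b1 b2 : Ob} (m1 : mor b0 b1) (m2 : mor b1 b2) :
  VMono B m1 -> VMono B m2 -> VMono B (compB m2 m1).
Proof. intros h1 h2 a Z g h E. rewrite !repR_compB in E. apply (h1 a), (h2 a), E. Qed.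

Definition isoB {b1 b2 : Ob} (i : mor b1 b2) : Prop :=
  exists j : mor b2 b1, compB j i = idB B b1 /\ compB i j = idB B b2.

Lemma downV_iso (S : MorClass B) {b1 b2 : Ob} (i : mor b1 b2) : isoB i -> downV B S _ _ i.
Proof.
  intros [j [Hji Hij]]. rewrite downV_elt. intros a1 a2 e _ Z y x Hyx.
  exists (repR a2 j ∘ y). split.
  - split.
    + rewrite <- repR_compB, Hij. apply repR_idB.
    + rewrite <- repR_repL, Hyx, <- repR_compB, Hji. apply repR_idB.
  - intros w' [Hw' _]. rewrite <- Hw', <- repR_compB, Hji. apply repR_idB.
Qed.

Lemma VMono_iso {b1 b2 : Ob} (i : mor b1 b2) : isoB i -> VMono B i.
Proof.
  intros [j [Hji _]] a Z g h E.
  now rewrite <- (repR_idB B a b1 g), <- (repR_idB B a b1 h), <- Hji, !repR_compB, E.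
Qed.

Definition is_Vpullback {c d b p : Ob} (n : mor c d) (u : mor b d) (n' : mor p b) (u' : mor p c)
  : Prop :=
  compB n u' = compB u n' /\
  forall (a : Ob) (Z : V) (x : hom Z (H a b)) (y : hom Z (H a c)),
    repR a u ∘ x = repR a n ∘ y ->
    exists! w : hom Z (H a p), repR a n' ∘ w = x /\ repR a u' ∘ w = y.

Lemma VMono_pullback {c d b p : Ob} (n : mor c d) (u : mor b d) (n' : mor p b) (u' : mor p c) :
  is_Vpullback n u n' u' -> VMono B n -> VMono B n'.
Proof.
  intros [Hc HU] Hn a Z w1 w2 E.
  assert (E' : repR a u' ∘ w1 = repR a u' ∘ w2).
  { apply (Hn a). now rewrite <- !repR_compB, Hc, !repR_compB, E. }
  assert (Sq : repR a u ∘ (repR a n' ∘ w1) = repR a n ∘ (repR a u' ∘ w1)).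
  { now rewrite <- !repR_compB, Hc. }
  destruct (HU a Z _ _ Sq) as [w [_ Uw]].
  transitivity w; [symmetry|]; apply Uw; split; auto.
Qed.

Lemma downV_pullback (S : MorClass B) {c d b p : Ob}
    (n : mor c d) (u : mor b d) (n' : mor p b) (u' : mor p c) :
  is_Vpullback n u n' u' -> downV B S _ _ n -> downV B S _ _ n'.
Proof.
  intros [Hc HU]. rewrite !downV_elt. intros hn a1 a2 e He Z y x Hyx.
  assert (Sq : repL e d ∘ (repR a2 u ∘ y) = repR a1 n ∘ (repR a1 u' ∘ x)).
  { now rewrite <- repR_repL, Hyx, <- !repR_compB, Hc. }
  destruct (hn a1 a2 e He Z _ _ Sq) as [w1 [[Hw1y Hw1x] U1]].
  destruct (HU a2 Z y w1 (eq_sym Hw1y)) as [w [[Hwy Hwu] Uw]].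
  exists w. split.
  - split; [exact Hwy|].
    assert (Sq' : repR a1 u ∘ (repL e b ∘ y) = repR a1 n ∘ (repR a1 u' ∘ x)).
    { now rewrite Hyx, <- !repR_compB, Hc. }
    destruct (HU a1 Z _ _ Sq') as [w3 [_ U3]].
    transitivity w3; [symmetry|]; apply U3; split.
    + now rewrite repR_repL, Hwy.
    + now rewrite repR_repL, Hwu.
    + now symmetry.
    + reflexivity.
  - intros w' [Hy' Hx']. apply Uw. split; [exact Hy'|].
    symmetry. apply U1. split.
    + now rewrite <- repR_compB, Hc, repR_compB, Hy'.
    + now rewrite <- repR_repL, Hx'.
Qed.

Lemma VMono_fibre (b : Ob) (J : Type) (A : J -> Ob) (m : forall i, mor (A i) b)
    (P : Ob) (q : mor P b) (p : forall i, mor P (A i)) :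
  is_Vfibre_product B b J A m P q p -> (forall i, VMono B (m i)) -> VMono B q.
Proof.
  intros [Hc HU] Hm a Z w1 w2 E.
  assert (Ei : forall i, repR a (p i) ∘ w1 = repR a (p i) ∘ w2).
  { intro i. apply (Hm i a). now rewrite <- !repR_compB, Hc. }
  destruct (HU a Z (repR a q ∘ w1) (fun i => repR a (p i) ∘ w1)) as [w [_ Uw]].
  { intro i. now rewrite <- repR_compB, Hc. }
  transitivity w; [symmetry|]; apply Uw; split; auto.
Qed.

Lemma downV_fibre (S : MorClass B) (b : Ob) (J : Type) (A : J -> Ob) (m : forall i, mor (A i) b)
    (P : Ob) (q : mor P b) (p : forall i, mor P (A i)) :
  is_Vfibre_product B b J A m P q p -> (forall i, downV B S _ _ (m i)) -> downV B S _ _ q.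
Proof.
  intros [Hc HU] Hm. rewrite downV_elt. intros a1 a2 e He Z y x Hyx.
  assert (Hi : forall i, exists! wi, repR a2 (m i) ∘ wi = y
                                   /\ repL e (A i) ∘ wi = repR a1 (p i) ∘ x).
  { intro i. apply (proj1 (downV_elt B S (m i)) (Hm i) a1 a2 e He).
    now rewrite <- repR_compB, Hc. }
  (* choose the lift for each component; the fibre product glues them *)
  pose (wf := fun i => proj1_sig (constructive_indefinite_description _ (Hi i))).
  assert (Hwf : forall i, (repR a2 (m i) ∘ wf i = y /\ repL e (A i) ∘ wf i = repR a1 (p i) ∘ x)
     /\ forall w', repR a2 (m i) ∘ w' = y /\ repL e (A i) ∘ w' = repR a1 (p i) ∘ x -> wf i = w').
  { intro i. unfold wf. now destruct (constructive_indefinite_description _ (Hi i)). }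
  destruct (HU a2 Z y wf) as [w [[Hwy Hwp] Uw]].
  { intro i. apply (Hwf i). }
  exists w. split.
  - split; [exact Hwy|].
    destruct (HU a1 Z (repR a1 q ∘ x) (fun i => repR a1 (p i) ∘ x)) as [w3 [_ U3]].
    { intro i. now rewrite <- repR_compB, Hc. }
    transitivity w3; [symmetry|]; apply U3; split.
    + now rewrite repR_repL, Hwy.
    + intro i. rewrite repR_repL, Hwp. apply (Hwf i).
    + reflexivity.
    + intro i. reflexivity.
  - intros w' [Hy' Hx']. apply Uw. split; [exact Hy'|].
    intro i. symmetry. apply (Hwf i). split.
    + now rewrite <- repR_compB, Hc.
    + now rewrite <- repR_repL, Hx'.
Qed.

Section CotensorMorphism.
Variables (X : V) (c d cX dX : Ob) (epsC : hom X (H cX c)) (epsD : hom X (H dX d)).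
Hypotheses (HC : is_cotensor B X c cX epsC) (HD : is_cotensor B X d dX epsD).
Variables (n : mor c d) (nX : mor cX dX).
Hypothesis HnX : forall (a : Ob) (Z : V) (z : hom Z (H a cX)),
    gcomp B epsD (repR a nX ∘ z) = repR a n ∘ gcomp B epsC z.

Lemma VMono_cotensor : VMono B n -> VMono B nX.
Proof.
  intros Hn a Z g h E. apply (cotensor_inj B X c cX epsC HC a Z), (Hn a).
  now rewrite <- !HnX, E.
Qed.

Lemma downV_cotensor (S : MorClass B) : downV B S _ _ n -> downV B S _ _ nX.
Proof.
  rewrite !downV_elt. intros hn a1 a2 e He Z y x Hyx.
  assert (Sq : repL e d ∘ gcomp B epsD y = repR a1 n ∘ gcomp B epsC x).
  { rewrite <- gcomp_repL, Hyx. apply HnX. }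
  destruct (hn a1 a2 e He _ _ _ Sq) as [w' [[Hw'y Hw'x] U]].
  destruct (cotensor_univ B X c cX epsC HC a2 Z w') as [w [Hw _]].
  exists w. split.
  - split.
    + apply (cotensor_inj B X d dX epsD HD a2 Z). now rewrite HnX, Hw.
    + apply (cotensor_inj B X c cX epsC HC a1 Z). now rewrite gcomp_repL, Hw.
  - intros w1 [Hw1y Hw1x]. apply (cotensor_inj B X c cX epsC HC a2 Z). rewrite Hw.
    apply U. split.
    + now rewrite <- HnX, Hw1y.
    + now rewrite <- gcomp_repL, Hw1x.
Qed.
End CotensorMorphism.
End Closure.

(** * Pullbacks and equalizers from finite conical V-limits *)

Inductive cospan_ob : Type := cs_left | cs_right | cs_apex.
Definition cospan_arrow (i j : cospan_ob) : bool :=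
  match i, j with
  | cs_left, cs_left | cs_right, cs_right | cs_apex, cs_apex
  | cs_left, cs_apex | cs_right, cs_apex => true
  | _, _ => false
  end.
Definition cospan_hom (i j : cospan_ob) : Type := if cospan_arrow i j then unit else Empty_set.
Definition cospan_id (i : cospan_ob) : cospan_hom i i :=
  match i with cs_left | cs_right | cs_apex => tt end.
Definition cospan_comp (i j k : cospan_ob) (g : cospan_hom j k) (f : cospan_hom i j)
  : cospan_hom i k.
Proof.
  destruct i, j, k; simpl in *;
    first [exact tt | (destruct f; fail) | (destruct g; fail)].
Defined.

Definition Cospan : Category.
Proof.
  refine {| ob := cospan_ob; hom := cospan_hom; idm := cospan_id; comp := cospan_comp |}.
  - intros a b f. destruct a, b; simpl in f; destruct f; reflexivity.
  - intros a b f. destruct a, b; simpl in f; destruct f; reflexivity.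
  - intros a b c d h g f. destruct a, b, c, d; simpl in f, g, h;
      try destruct f; try destruct g; try destruct h; reflexivity.
Defined.

Lemma Cospan_finite : finite_cat Cospan.
Proof.
  split.
  - exists [cs_left; cs_right; cs_apex]. intros []; simpl; auto.
  - intros i j. destruct i, j; simpl;
      first [exists [tt]; intros []; left; reflexivity | exists (@nil Empty_set); intros []].
Qed.

Inductive pair_ob : Type := pp_source | pp_target.
Definition pair_hom (i j : pair_ob) : Type :=
  match i, j with
  | pp_source, pp_source | pp_target, pp_target => unit
  | pp_source, pp_target => bool
  | pp_target, pp_source => Empty_set
  end.
Definition pair_id (i : pair_ob) : pair_hom i i := match i with pp_source | pp_target => tt end.
Definition pair_comp (i j k : pair_ob) (g : pair_hom j k) (f : pair_hom i j) : pair_hom i k.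
Proof.
  destruct i, j, k; simpl in *;
    first [exact tt | exact f | exact g | (destruct f; fail) | (destruct g; fail)].
Defined.

Definition ParallelPair : Category.
Proof.
  refine {| ob := pair_ob; hom := pair_hom; idm := pair_id; comp := pair_comp |}.
  - intros a b f. destruct a, b; simpl in f; destruct f; reflexivity.
  - intros a b f. destruct a, b; simpl in f; destruct f; reflexivity.
  - intros a b c d h g f. destruct a, b, c, d; simpl in f, g, h;
      try destruct f; try destruct g; try destruct h; reflexivity.
Defined.

Lemma ParallelPair_finite : finite_cat ParallelPair.
Proof.
  split.
  - exists [pp_source; pp_target]. intros []; simpl; auto.
  - intros i j. destruct i, j; simpl.
    + exists [tt]; intros []; left; reflexivity.
    + exists [true; false]; intros []; simpl; auto.
    + exists (@nil Empty_set); intros [].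
    + exists [tt]; intros []; left; reflexivity.
Qed.

Section FiniteLimits.
Context {V : SMCC} (B : VCat V) (Hfl : has_finite_Vlimits B).
Local Notation Ob := (vob V B).
Local Notation H := (vhom V B).
Local Notation mor := (mor B).
Local Notation compB := (compB B).
Local Notation repR := (repR B).

Lemma Vpullback_exists {c d b : Ob} (n : mor c d) (u : mor b d) :
  exists p (n' : mor p b) (u' : mor p c), is_Vpullback B n u n' u'.
Proof.
  pose (D := fun x : Cospan => match x with cs_left => b | cs_right => c | cs_apex => d end).
  pose (Dm := fun (i j : Cospan) => match i, j return cospan_hom i j -> mor (D i) (D j) with
     | cs_left, cs_left | cs_right, cs_right | cs_apex, cs_apex => fun _ => idB B _
     | cs_left, cs_apex => fun _ => u
     | cs_right, cs_apex => fun _ => n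
     | cs_left, cs_right | cs_right, cs_left | cs_apex, cs_left | cs_apex, cs_right =>
         fun f => match f with end
     end).
  assert (Hid : forall i, Dm i i (idm i) = idB B (D i)) by (intros []; reflexivity).
  assert (Hc : forall i j k (g : hom j k) (f : hom i j),
             Dm i k (g ∘ f) = compB (Dm j k g) (Dm i j f)).
  { intros i j k g f. destruct i, j, k; simpl in f, g; try destruct f; try destruct g; simpl;
      try rewrite compB_idl; try rewrite compB_idr; reflexivity. }
  destruct (Hfl Cospan Cospan_finite D Dm Hid Hc) as [L [pi [Hcone HU]]].
  exists L, (pi cs_left), (pi cs_right). split.
  - pose proof (Hcone cs_right cs_apex tt) as Hn. pose proof (Hcone cs_left cs_apex tt) as Hu.
    simpl in Hn, Hu. now rewrite Hn, Hu.
  - intros a Z x y Hxy.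
    pose (xs := fun j : Cospan => match j return hom Z (H a (D j)) with
                  cs_left => x | cs_right => y | cs_apex => repR a u ∘ x end).
    assert (Hxs : forall i j (f : hom i j), repR a (Dm i j f) ∘ xs i = xs j).
    { intros i j f. destruct i, j; simpl in f; destruct f; simpl;
        try apply repR_idB; try reflexivity. now symmetry. }
    destruct (HU a Z xs Hxs) as [w [Hw Uw]].
    exists w. split.
    + split; [apply (Hw cs_left) | apply (Hw cs_right)].
    + intros w' [Hx Hy]. apply Uw. intros []; simpl; auto.
      rewrite <- (Hcone cs_left cs_apex tt). simpl. now rewrite repR_compB, Hx.
Qed.

Definition is_Vequalizer {b q e : Ob} (i1 i2 : mor b q) (m : mor e b) : Prop :=
  compB i1 m = compB i2 m /\
  forall (a : Ob) (Z : V) (x : hom Z (H a b)), repR a i1 ∘ x = repR a i2 ∘ x ->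
    exists! w : hom Z (H a e), repR a m ∘ w = x.

Lemma Vequalizer_exists {b q : Ob} (i1 i2 : mor b q) :
  exists e (m : mor e b), is_Vequalizer i1 i2 m.
Proof.
  pose (D := fun x : ParallelPair => match x with pp_source => b | pp_target => q end).
  pose (Dm := fun (i j : ParallelPair) => match i, j return pair_hom i j -> mor (D i) (D j) with
     | pp_source, pp_source | pp_target, pp_target => fun _ => idB B _
     | pp_source, pp_target => fun f => if f then i1 else i2
     | pp_target, pp_source => fun f => match f with end
     end).
  assert (Hid : forall i, Dm i i (idm i) = idB B (D i)) by (intros []; reflexivity).
  assert (Hc : forall i j k (g : hom j k) (f : hom i j),
             Dm i k (g ∘ f) = compB (Dm j k g) (Dm i j f)).
  { intros i j k g f. destruct i, j, k; simpl in f, g; try destruct f; try destruct g; simpl;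
      try rewrite compB_idl; try rewrite compB_idr; reflexivity. }
  destruct (Hfl ParallelPair ParallelPair_finite D Dm Hid Hc) as [L [pi [Hcone HU]]].
  exists L, (pi pp_source). split.
  - pose proof (Hcone pp_source pp_target true) as H1.
    pose proof (Hcone pp_source pp_target false) as H2.
    simpl in H1, H2. now rewrite H1, H2.
  - intros a Z x Hx.
    pose (xs := fun j : ParallelPair => match j return hom Z (H a (D j)) with
                  pp_source => x | pp_target => repR a i1 ∘ x end).
    assert (Hxs : forall i j (f : hom i j), repR a (Dm i j f) ∘ xs i = xs j).
    { intros i j f. destruct i, j; simpl in f; destruct f; simpl;
        try apply repR_idB; try reflexivity. now symmetry. }
    destruct (HU a Z xs Hxs) as [w [Hw Uw]].
    exists w. split.
    + apply (Hw pp_source).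
    + intros w' Hxw. apply Uw. intros []; simpl; auto.
      rewrite <- (Hcone pp_source pp_target true). simpl. now rewrite repR_compB, Hxw.
Qed.
End FiniteLimits.

(** * Factorization through strong V-monos orthogonal to a class *)

Section StrMonoDown.
Context {V : SMCC} (B : VCat V).
Local Notation Ob := (vob V B).
Local Notation I := (I_ V).
Local Notation mor := (mor B).
Local Notation compB := (compB B).
Local Notation repR := (repR B).
Variable Sg : MorClass B.

Definition strmono_down : MorClass B := capC B (downV B Sg) (StrMonoV B).

Lemma strmono_down_VMono {b1 b2 : Ob} (m : mor b1 b2) : strmono_down _ _ m -> VMono B m.
Proof. now intros [_ [h _]]. Qed.

Lemma strmono_down_transfer {c d c' d' : Ob} (n : mor c d) (n' : mor c' d') :
  (VMono B n -> VMono B n') -> (forall S, downV B S _ _ n -> downV B S _ _ n') ->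
  strmono_down _ _ n -> strmono_down _ _ n'.
Proof. intros Hm Hd [h1 [h2 h3]]. exact (conj (Hd _ h1) (conj (Hm h2) (Hd (EpiV B) h3))). Qed.

Lemma strmono_down_comp {b0 b1 b2 : Ob} (m1 : mor b0 b1) (m2 : mor b1 b2) :
  strmono_down _ _ m1 -> strmono_down _ _ m2 -> strmono_down _ _ (compB m2 m1).
Proof.
  intros [d1 [h1 e1]] [d2 [h2 e2]].
  exact (conj (downV_comp B _ _ _ d1 d2)
           (conj (VMono_comp B _ _ h1 h2) (downV_comp B (EpiV B) _ _ e1 e2))).
Qed.

Lemma strmono_down_iso {b1 b2 : Ob} (i : mor b1 b2) : isoB B i -> strmono_down _ _ i.
Proof.
  intro Hi. exact (conj (downV_iso B _ _ Hi) (conj (VMono_iso B _ Hi) (downV_iso B (EpiV B) _ Hi))).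
Qed.

Lemma strmono_down_fibre (b : Ob) (J : Type) (A : J -> Ob) (m : forall i, mor (A i) b)
    (P : Ob) (q : mor P b) (p : forall i, mor P (A i)) :
  is_Vfibre_product B b J A m P q p -> (forall i, strmono_down _ _ (m i)) ->
  strmono_down _ _ q.
Proof.
  intros Hfp Hm. split; [|split].
  - apply (downV_fibre B Sg b J A m P q p Hfp). intro i. exact (proj1 (Hm i)).
  - apply (VMono_fibre B b J A m P q p Hfp). intro i. exact (proj1 (proj2 (Hm i))).
  - apply (downV_fibre B (EpiV B) b J A m P q p Hfp). intro i. exact (proj2 (proj2 (Hm i))).
Qed.

Definition lifts {a1 a2 b1 b2 : Ob} (e : mor a1 a2) (n : mor b1 b2) : Prop :=
  forall (y : mor a2 b2) (x : mor a1 b1), compB y e = compB n x ->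
    exists d : mor a2 b1, compB n d = y /\ compB d e = x.

(* [q] is the fibre product of all [strmono_down] morphisms through which [f] factors. *)
Lemma least_strmono_down_factor (Hwc : fin_well_complete B) {a0 b0 : Ob} (f : mor a0 b0) :
  exists p (e : mor a0 p) (q : mor p b0),
    strmono_down _ _ q /\ compB q e = f /\
    forall c (n : mor c b0) (v : mor a0 c), strmono_down _ _ n -> compB n v = f ->
      exists s : mor p c, compB n s = q /\ compB s e = v.
Proof.
  destruct Hwc as [_ Hfib].
  pose (Ix := {c : Ob & {n : mor c b0 & {v : mor a0 c | strmono_down _ _ n /\ compB n v = f}}}).
  pose (A := fun i : Ix => projT1 i).
  pose (m := fun i : Ix => projT1 (projT2 i) : mor (A i) b0).
  pose (v := fun i : Ix => proj1_sig (projT2 (projT2 i)) : mor a0 (A i)).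
  assert (Hm : forall i, strmono_down _ _ (m i) /\ compB (m i) (v i) = f)
    by (intro i; exact (proj2_sig (projT2 (projT2 i)))).
  destruct (Hfib b0 Ix A m (fun i => proj2 (proj1 (Hm i)))) as [P [q [p Hfp]]].
  pose proof (strmono_down_fibre b0 Ix A m P q p Hfp (fun i => proj1 (Hm i))) as Hq.
  destruct Hfp as [Hc HU].
  destruct (HU a0 I f v) as [e [[Hqe Hpe] _]].
  { intro i. rewrite <- compB_repR. apply Hm. }
  rewrite <- compB_repR in Hqe.
  exists P, e, q. split; [exact Hq | split; [exact Hqe |]].
  intros c n w Hn Hnw.
  pose (i := existT (fun c => {n : mor c b0 & {v : mor a0 c | strmono_down _ _ n /\ compB n v = f}})
               c (existT _ n (exist _ w (conj Hn Hnw))) : Ix).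
  exists (p i). split; [exact (Hc i)|]. rewrite compB_repR. exact (Hpe i).
Qed.

Lemma least_factor_lifts (Hfl : has_finite_Vlimits B) {a0 p b0 : Ob} (e : mor a0 p) (q : mor p b0) :
  strmono_down _ _ q ->
  (forall c (n : mor c b0) (v : mor a0 c), strmono_down _ _ n -> compB n v = compB q e ->
     exists s : mor p c, compB n s = q /\ compB s e = v) ->
  forall c d (n : mor c d), strmono_down _ _ n -> lifts e n.
Proof.
  intros Hq Hleast c d n Hn y x Hyx.
  destruct (Vpullback_exists B Hfl n y) as [Q [n' [g Hpb]]].
  assert (Hn' : strmono_down _ _ n').
  { revert Hn. apply strmono_down_transfer.
    - exact (VMono_pullback B n y n' g Hpb).
    - intro S. exact (downV_pullback B S n y n' g Hpb). }
  destruct Hpb as [Hpc HpU].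
  destruct (HpU a0 I e x) as [k [[Hk1 Hk2] _]].
  { now rewrite <- !compB_repR. }
  rewrite <- compB_repR in Hk1, Hk2.
  (* [q ∘ n'] is a smaller factorization of [q ∘ e], so [n'] is split by minimality *)
  destruct (Hleast Q (compB q n') k (strmono_down_comp _ _ Hn' Hq))
    as [s [Hs Hse]].
  { now rewrite <- compB_assoc, Hk1. }
  assert (Hn's : compB n' s = idB B p).
  { apply (strmono_down_VMono q Hq p I). rewrite <- !compB_repR.
    now rewrite compB_assoc, Hs, compB_idr. }
  exists (compB g s). split.
  - now rewrite compB_assoc, Hpc, <- compB_assoc, Hn's, compB_idr.
  - now rewrite <- compB_assoc, Hse.
Qed.

(* Cotensoring turns a [Z]-element square against [n] into an ordinary square against
   [n^Z], which again lies in [strmono_down]. *)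
Lemma upV_of_lifts (Hcot : cotensored B) {a0 p : Ob} (e : mor a0 p) :
  (forall c d (n : mor c d), strmono_down _ _ n -> lifts e n) -> upV B strmono_down _ _ e.
Proof.
  intros Hlift c d n Hn. apply orthV_elt. intros Z y x Hyx.
  destruct (Hcot Z c) as [cZ [epsC HC]]. destruct (Hcot Z d) as [dZ [epsD HD]].
  destruct (cotensor_mor B Z c d cZ dZ epsC epsD HD n) as [nZ HnZ].
  assert (HnZN : strmono_down _ _ nZ).
  { revert Hn. apply strmono_down_transfer.
    - exact (VMono_cotensor B Z c d cZ dZ epsC epsD HC n nZ HnZ).
    - intro S. exact (downV_cotensor B Z c d cZ dZ epsC epsD HC HD n nZ HnZ S). }
  destruct (cotensor_univ B Z d dZ epsD HD p I (y ∘ ru Z)) as [yZ [HyZ _]].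
  destruct (cotensor_univ B Z c cZ epsC HC a0 I (x ∘ ru Z)) as [xZ [HxZ _]].
  assert (Sq : compB yZ e = compB nZ xZ).
  { apply (cotensor_inj B Z d dZ epsD HD a0 I).
    rewrite compB_repL, gcomp_repL, HyZ, compB_repR, HnZ, HxZ.
    now rewrite !comp_assoc, Hyx. }
  destruct (Hlift _ _ nZ HnZN yZ xZ Sq) as [s [Hs1 Hs2]].
  assert (Hw : repR p n ∘ (gcomp B epsC s ∘ rui Z) = y).
  { rewrite comp_assoc, <- HnZ, <- compB_repR, Hs1, HyZ.
    now rewrite <- comp_assoc, ru_rui, comp_idr. }
  exists (gcomp B epsC s ∘ rui Z). split.
  - split; [exact Hw|].
    rewrite comp_assoc, <- gcomp_repL, <- compB_repL, Hs2, HxZ.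
    now rewrite <- comp_assoc, ru_rui, comp_idr.
  - intros w' [Hw' _]. apply (strmono_down_VMono n Hn p Z). now rewrite Hw, Hw'.
Qed.

Lemma strmono_down_factorization (Hwc : fin_well_complete B) (Hcot : cotensored B)
    {a0 b0 : Ob} (f : mor a0 b0) :
  exists p (e : mor a0 p) (q : mor p b0),
    upV B strmono_down _ _ e /\ strmono_down _ _ q /\ f = compB q e.
Proof.
  destruct (least_strmono_down_factor Hwc f) as [P [e [q [Hq [Hf Hleast]]]]].
  exists P, e, q. split; [|split; [exact Hq | now symmetry]].
  apply (upV_of_lifts Hcot). subst f.
  exact (least_factor_lifts (proj1 Hwc) e q Hq Hleast).
Qed.

Theorem fact_system_strmono_down (Hwc : fin_well_complete B) (Hcot : cotensored B) :
  is_fact_system B (upV B strmono_down) strmono_down.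
Proof.
  split; [|split].
  - intros b1 b2 m. split.
    + intros Hm a1 a2 e He. exact (He b1 b2 m Hm).
    + (* the left factor of [m] is orthogonal to [m], hence split mono, hence iso *)
      intros Hd. destruct (strmono_down_factorization Hwc Hcot m) as [P [e [q [He [Hq Hm]]]]].
      pose proof (proj1 (orthV_elt B e m) (Hd _ _ e He)) as Ho.
      destruct (Ho I q (idB B b1)) as [s [[Hs1 Hs2] _]].
      { now rewrite <- compB_repL, <- compB_repR, compB_idr, Hm. }
      rewrite <- compB_repR in Hs1. rewrite <- compB_repL in Hs2.
      assert (Hes : compB e s = idB B P).
      { apply (strmono_down_VMono q Hq P I). rewrite <- !compB_repR.
        now rewrite compB_assoc, <- Hm, Hs1, compB_idr. }
      rewrite Hm. apply strmono_down_comp; [|exact Hq].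
      apply strmono_down_iso. now exists s.
  - reflexivity.
  - intros a b f. exact (strmono_down_factorization Hwc Hcot f).
Qed.
End StrMonoDown.

(** * V-cokernel pairs: the left class is [EpiV] *)

Section Epi.
Context {V : SMCC} (B : VCat V).
Local Notation Ob := (vob V B).
Local Notation I := (I_ V).
Local Notation mor := (mor B).
Local Notation compB := (compB B).
Local Notation repR := (repR B).

Lemma Vequalizer_StrMonoV {b q e : Ob} (i1 i2 : mor b q) (m : mor e b) :
  is_Vequalizer B i1 i2 m -> StrMonoV B _ _ m.
Proof.
  intros [Hm HU].
  assert (Hmono : VMono B m).
  { intros a Z w1 w2 Ew. destruct (HU a Z (repR a m ∘ w1)) as [w [_ Uw]].
    { now rewrite <- !repR_compB, Hm. }
    transitivity w; [symmetry|]; apply Uw; auto. }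
  split; [exact Hmono|]. intros a1 a2 e' He'. apply orthV_elt. intros Z y x Hyx.
  assert (Hy : repR a2 i1 ∘ y = repR a2 i2 ∘ y).
  { apply (He' q). now rewrite <- !repR_repL, Hyx, <- !repR_compB, Hm. }
  destruct (HU a2 Z y Hy) as [w [Hw Uw]]. exists w. split.
  - split; [exact Hw|]. apply (Hmono a1). now rewrite repR_repL, Hw.
  - intros w' [Hw' _]. exact (Uw w' Hw').
Qed.

(* A morphism orthogonal to the equalizer of its cokernel pair factors through it, so the
   two legs of the cokernel pair agree. *)
Lemma VEpi_of_upV_StrMonoV (Hfl : has_finite_Vlimits B) (Hck : has_Vcokernel_pairs B)
    {a b : Ob} (e : mor a b) :
  upV B (StrMonoV B) _ _ e -> VEpi B e.
Proof.
  intro Hort. destruct (Hck a b e) as [Q [i1 [i2 [Hie Hpo]]]].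
  destruct (Vequalizer_exists B Hfl i1 i2) as [E [m Heq]].
  pose proof (Vequalizer_StrMonoV i1 i2 m Heq) as Hstr. destruct Heq as [Hm HU].
  destruct (HU a I e) as [k [Hk _]].
  { now rewrite <- !compB_repR. }
  pose proof (proj1 (orthV_elt B e m) (Hort _ _ m Hstr)) as Ho.
  destruct (Ho I (idB B b) k) as [s [[Hs _] _]].
  { now rewrite <- compB_repL, compB_idl, Hk. }
  rewrite <- compB_repR in Hs.
  assert (Hi : i1 = i2).
  { now rewrite <- (compB_idr B i1), <- (compB_idr B i2), <- Hs, !compB_assoc, Hm. }
  intros c Z g h Egh. destruct (Hpo c) as [_ HP].
  destruct (HP Z g h Egh) as [u [[Hu1 Hu2] _]].
  now rewrite <- Hu1, <- Hu2, Hi.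
Qed.

Lemma fact_system_ext (E M E' M' : MorClass B) : is_fact_system B E M ->
  (forall a b f, E a b f <-> E' a b f) -> (forall a b f, M a b f <-> M' a b f) ->
  is_fact_system B E' M'.
Proof.
  intros [HM [HE Hfac]] HEE' HMM'. split; [|split].
  - intros b1 b2 m. rewrite <- HMM', HM.
    split; intros Hx a1 a2 e He; apply Hx, HEE', He.
  - intros a1 a2 e. rewrite <- HEE', HE.
    split; intros Hx b1 b2 m Hm; apply Hx, HMM', Hm.
  - intros a b f. destruct (Hfac a b f) as [c [e [m [He [Hm Hf]]]]].
    exists c, e, m. rewrite <- HEE', <- HMM'. auto.
Qed.

Lemma strmono_down_empty {b1 b2 : Ob} (m : mor b1 b2) :
  strmono_down B (fun _ _ _ => False) _ _ m <-> StrMonoV B _ _ m.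
Proof. split; [now intros [_ Hm] | intro Hm; split; [intros ? ? ? [] | exact Hm]]. Qed.
End Epi.

Theorem corollary7p5 (V : SMCC) (B : VCat V)
    (Hwc : fin_well_complete B) (Hcot : cotensored B) :
  (has_Vcokernel_pairs B -> is_fact_system B (EpiV B) (StrMonoV B)) /\
  (forall Sigma : MorClass B,
     is_fact_system B
       (upV B (capC B (downV B Sigma) (StrMonoV B)))
       (capC B (downV B Sigma) (StrMonoV B))).
Proof.
  split.
  - intro Hck.
    apply (fact_system_ext B _ _ _ _ (fact_system_strmono_down B (fun _ _ _ => False) Hwc Hcot)).
    + intros a b e. split.
      * intro He. apply (VEpi_of_upV_StrMonoV B (proj1 Hwc) Hck).
        intros b1 b2 m Hm. apply He, strmono_down_empty, Hm.
      * intros He b1 b2 m [_ [_ Hm]]. exact (Hm a b e He).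
    + intros a b m. apply strmono_down_empty.
  - intro Sigma. exact (fact_system_strmono_down B Sigma Hwc Hcot).
Qed.
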